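(* The following are equivalent: (a) the Collatz conjecture: $\sigma_\infty(n)<\infty$ for every positive integer $n$; (b) the space $\{h\in A(D):\mathcal{F}h=h\}$ of eigenvectors of $\mathcal{F}\in\mathcal{L}(A(D))$ for eigenvalue $1$ (together with $0$) has dimension $2$; (c) $\frac{z}{1-z}\in Z$; (d) $\lim_{n\to\infty}\mathcal{F}^n(z+z^2)=\frac{z}{1-z}$ in the topology of $A(D)$.
   Context: $T$ is the Collatz map $T(n)=\frac{3n+1}2$ ($n$ odd), $T(n)=\frac n2$ ($n$ even); for a positive integer $n$, $\sigma_\infty(n)$ is the least $k\ge0$ with $T^k(n)=1$ ($\infty$ if none). $D$ is the open unit disk, $A(D)$ the holomorphic functions on $D$ with the topology of uniform convergence on compact subsets. $\mathcal{F}$ is the operator on $A(D)$ given by $\mathcal{F}\big(\sum_{n\ge0}a_nz^n\big)=\sum_{n\ge0}a_nz^{2n}+\sum_{k\ge0}a_{3k+2}z^{2k+1}$. For $k\ge0$, $Pol_k(z)=\sum_{n\ge1:\,\sigma_\infty(n)=k}z^n$, and $Z$ is the closure in $A(D)$ of $\operatorname{span}\{Pol_k:k\ge0\}$. *)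

From Stdlib Require Import Reals Arith Lia Bool List.
From Coquelicot Require Import Coquelicot.
Open Scope R_scope.

(* The Collatz map T on positive integers (on nat; T 0 = 0 is irrelevant). *)
Definition T (n : nat) : nat :=
  if Nat.odd n then ((3 * n + 1) / 2)%nat else (n / 2)%nat.

(* sigma_inf n = k  (k finite): k is the least k with T^k n = 1. *)
Definition sigma_is (n k : nat) : bool :=
  Nat.eqb (Nat.iter k T n) 1 &&
  List.forallb (fun j => negb (Nat.eqb (Nat.iter j T n) 1)) (List.seq 0 k).

Definition sigma_finite (n : nat) : Prop := exists k, Nat.iter k T n = 1%nat.

(* Elements of A(D) are represented by their Taylor coefficient sequences
   a : nat -> C; a represents sum_n a_n z^n. *)
Definition term (a : nat -> C) (z : C) (n : nat) : C := (a n * z ^ n)%C.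

Definition PS (a : nat -> C) (z : C) : C :=
  (Series (fun n => fst (term a z n)), Series (fun n => snd (term a z n))).

(* a defines a holomorphic function on the open unit disk D:
   its power series converges at every point of D. *)
Definition inAD (a : nat -> C) : Prop :=
  forall z : C, Cmod z < 1 -> ex_series (term a z).

(* The operator F:  F(sum a_n z^n) = sum a_n z^(2n) + sum a_(3k+2) z^(2k+1). *)
Definition Fop (a : nat -> C) : nat -> C :=
  fun m => if Nat.odd m then a (3 * (m / 2) + 2)%nat else a (m / 2)%nat.

Definition Pol (k : nat) : nat -> C :=
  fun n => if (1 <=? n)%nat && sigma_is n k then 1%C else 0%C.

Definition polcomb (N : nat) (c : nat -> C) : nat -> C :=
  fun n => sum_n (fun k => (c k * Pol k n)%C) N.

(* g : C -> C lies in the closure Z (in the topology of uniform convergence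
   on compact subsets of D) of span{Pol_k}: every basic neighbourhood
   {f : sup_{|z|<=r} |f - g| < eps}, 0<r<1, eps>0, meets the span. *)
Definition inZ (g : C -> C) : Prop :=
  forall r eps : R, 0 < r < 1 -> 0 < eps ->
    exists (N : nat) (c : nat -> C),
      forall z : C, Cmod z <= r -> Cmod (g z - PS (polcomb N c) z)%C < eps.

(* A sequence of elements f_n of A(D) converges to g in A(D):
   uniform convergence on each closed disk |z| <= r < 1. *)
Definition cvg_AD (f : nat -> nat -> C) (g : C -> C) : Prop :=
  forall r eps : R, 0 < r < 1 -> 0 < eps ->
    exists N : nat, forall n : nat, (N <= n)%nat ->
      forall z : C, Cmod z <= r -> Cmod (PS (f n) z - g z)%C < eps.

Definition fixedF (h : nat -> C) : Prop := inAD h /\ forall m, Fop h m = h m.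

Definition fixed_space_dim2 : Prop :=
  exists h1 h2 : nat -> C,
    fixedF h1 /\ fixedF h2 /\
    (forall a b : C, (forall m, (a * h1 m + b * h2 m)%C = 0%C) -> a = 0%C /\ b = 0%C) /\
    (forall h, fixedF h -> exists a b : C, forall m, h m = (a * h1 m + b * h2 m)%C).

Definition zz2 : nat -> C := fun n => if (n =? 1)%nat || (n =? 2)%nat then 1%C else 0%C.

From Stdlib Require Import Reals Lia Bool List FunctionalExtensionality
  ClassicalEpsilon Classical Psatz.
From Coquelicot Require Import Coquelicot.
Open Scope R_scope.

(* Since [Fop a = a o T], a fixed point of F is constant along Collatz orbits,
   and F^n(z + z^2) is the indicator of the m >= 1 reaching 1 within n + 1
   steps, a sum of Pol_k's. If every orbit reaches 1, the fixed points are the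
   combinations of 1 and z/(1-z), and F^n(z + z^2) agrees with z/(1-z) on ever
   longer initial segments of coefficients, all of modulus <= 1, hence
   converges in A(D). If some n0 >= 1 never reaches 1, the indicator of the
   numbers reaching 1 is a third independent fixed point, and every element of
   span{Pol_k} has vanishing n0-th coefficient; by Cauchy's estimate this
   survives in the closure Z, which therefore misses z/(1-z). *)

(** * The Collatz map *)

Lemma div2_spec n : n = (2 * (n / 2) + Nat.b2n (Nat.odd n))%nat.
Proof. rewrite <- Nat.div2_div. apply Nat.div2_odd. Qed.

Lemma T_odd n : Nat.odd n = true -> T n = (3 * (n / 2) + 2)%nat.
Proof.
  intros Hodd. unfold T. rewrite Hodd.
  pose proof (div2_spec n) as Hn. rewrite Hodd in Hn. simpl Nat.b2n in Hn.
  rewrite Hn at 1.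
  replace (3 * (2 * (n / 2) + 1) + 1)%nat with ((3 * (n / 2) + 2) * 2)%nat by lia.
  apply Nat.div_mul. lia.
Qed.

Lemma T_even n : Nat.odd n = false -> n = (2 * T n)%nat.
Proof.
  intros Heven. unfold T. rewrite Heven.
  pose proof (div2_spec n) as Hn. rewrite Heven in Hn. simpl Nat.b2n in Hn. lia.
Qed.

Lemma Fop_T a m : Fop a m = a (T m).
Proof.
  unfold Fop. destruct (Nat.odd m) eqn:Hodd.
  - rewrite (T_odd m Hodd). reflexivity.
  - unfold T. rewrite Hodd. reflexivity.
Qed.

Lemma iter_Fop n a m : Nat.iter n Fop a m = a (Nat.iter n T m).
Proof.
  revert a m. induction n as [|n IH]; intros a m; [reflexivity|].
  rewrite Nat.iter_succ_r, IH, Fop_T. reflexivity.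
Qed.

Lemma le_double_T m : (m <= 2 * T m)%nat.
Proof.
  destruct (Nat.odd m) eqn:Hodd.
  - rewrite (T_odd m Hodd). pose proof (div2_spec m) as Hm.
    rewrite Hodd in Hm. simpl Nat.b2n in Hm. lia.
  - rewrite (T_even m Hodd) at 1. lia.
Qed.

Lemma le_pow2_iter_T k m : (m <= 2 ^ k * Nat.iter k T m)%nat.
Proof.
  revert m. induction k as [|k IH]; intros m; [simpl; lia|].
  rewrite Nat.iter_succ_r, Nat.pow_succ_r'.
  pose proof (IH (T m)). pose proof (le_double_T m). nia.
Qed.

Lemma T_eq_0 m : T m = 0%nat <-> m = 0%nat.
Proof. split; intros H; [pose proof (le_double_T m); lia | subst; reflexivity]. Qed.

Lemma T_eq_1 m : T m = 1%nat -> m = 2%nat.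
Proof.
  intros H. destruct (Nat.odd m) eqn:Hodd.
  - rewrite (T_odd m Hodd) in H. lia.
  - rewrite (T_even m Hodd), H. reflexivity.
Qed.

Lemma iter_T_0 k : Nat.iter k T 0%nat = 0%nat.
Proof. induction k as [|k IH]; simpl; [|rewrite IH]; reflexivity. Qed.

Lemma iter_T_1 k : Nat.iter k T 1%nat = 1%nat \/ Nat.iter k T 1%nat = 2%nat.
Proof. induction k as [|k [IH | IH]]; simpl; rewrite ?IH; auto. Qed.

Lemma sigma_finite_T m : sigma_finite (T m) <-> sigma_finite m.
Proof.
  split.
  - intros [k Hk]. exists (S k). rewrite Nat.iter_succ_r. exact Hk.
  - intros [[|k] Hk].
    + simpl in Hk. subst. exists 1%nat. reflexivity.
    + exists k. rewrite <- Nat.iter_succ_r. exact Hk.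
Qed.

(* 1 -> 2 -> 1 is a cycle, so landing in {1, 2} after n steps is the same as
   having hit 1 within n + 1 steps. *)
Lemma iter_T_in_12 n m :
  (Nat.iter n T m = 1%nat \/ Nat.iter n T m = 2%nat) <->
  exists k, (k <= S n)%nat /\ Nat.iter k T m = 1%nat.
Proof.
  split.
  - intros [H|H]; [exists n | exists (S n)]; split; auto.
    simpl. rewrite H. reflexivity.
  - intros [k [Hk H]]. destruct (Nat.eq_dec k (S n)) as [->|Hne].
    + right. apply T_eq_1. exact H.
    + replace n with ((n - k) + k)%nat by lia.
      rewrite Nat.iter_add, H. apply iter_T_1.
Qed.

Definition reaches_within (m N : nat) : bool :=
  existsb (fun k => Nat.iter k T m =? 1)%nat (seq 0 (S N)).

Lemma reaches_withinP m N :
  reaches_within m N = true <-> exists k, (k <= N)%nat /\ Nat.iter k T m = 1%nat.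
Proof.
  unfold reaches_within. rewrite existsb_exists. split.
  - intros [k [Hin Hk]]. apply in_seq in Hin. apply Nat.eqb_eq in Hk.
    exists k. split; [lia | exact Hk].
  - intros [k [Hk H]]. exists k. rewrite in_seq, Nat.eqb_eq. split; [lia | exact H].
Qed.

Lemma reaches_within_0 m : reaches_within m 0 = (m =? 1)%nat.
Proof. unfold reaches_within. simpl. apply orb_false_r. Qed.

Lemma reaches_within_S m N :
  reaches_within m (S N) = reaches_within m N || (Nat.iter (S N) T m =? 1)%nat.
Proof.
  unfold reaches_within. rewrite (seq_S (S N)), existsb_app. simpl.
  rewrite orb_false_r. reflexivity.
Qed.

Lemma sigma_is_0 m : sigma_is m 0 = (m =? 1)%nat.
Proof. unfold sigma_is. simpl. apply andb_true_r. Qed.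

Lemma sigma_is_S m N :
  sigma_is m (S N) = (Nat.iter (S N) T m =? 1)%nat && negb (reaches_within m N).
Proof.
  unfold sigma_is, reaches_within. f_equal.
  induction (seq 0 (S N)) as [|k l IH]; simpl; [reflexivity|].
  rewrite IH. destruct (_ =? 1)%nat; reflexivity.
Qed.

Lemma sigma_is_iter m k : sigma_is m k = true -> Nat.iter k T m = 1%nat.
Proof. unfold sigma_is. intros H. apply andb_true_iff in H. apply Nat.eqb_eq, H. Qed.

(* [sum_n] lives in Coquelicot's [AbelianMonoid]; [ring] and [field] only
   recognise its operations on C after this change. *)
Ltac fold_C_plus :=
  change (@plus C_AbelianMonoid) with Cplus in *;
  change (AbelianMonoid.sort C_AbelianMonoid) with C in *.

Lemma sum_n_C_zero (u : nat -> C) n :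
  (forall k, (k <= n)%nat -> u k = 0%C) -> sum_n u n = RtoC 0.
Proof.
  induction n as [|n IH]; intros H; [rewrite sum_O; apply H; lia|].
  rewrite sum_Sn, IH, H; [fold_C_plus; ring | lia | intros; apply H; lia].
Qed.

Lemma sum_n_Cmult_l (a : C) (u : nat -> C) n :
  sum_n (fun k => (a * u k)%C) n = (a * sum_n u n)%C.
Proof. exact (sum_n_mult_l a u n). Qed.

Lemma sum_n_Cmult_r (a : C) (u : nat -> C) n :
  sum_n (fun k => (u k * a)%C) n = (sum_n u n * a)%C.
Proof. exact (sum_n_mult_r a u n). Qed.

Lemma Cmod_sum_n (f : nat -> C) n : Cmod (sum_n f n) <= sum_n (fun j => Cmod (f j)) n.
Proof. exact (norm_sum_n_m (V := C_NormedModule) f 0 n). Qed.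

Lemma sum_n_le_const (x : nat -> R) B n :
  (forall j, (j <= n)%nat -> x j <= B) -> sum_n x n <= INR (S n) * B.
Proof.
  intros H. rewrite <- sum_n_const, !sum_n_Reals. apply sum_Rle. exact H.
Qed.

Lemma sum_n_C_delta (x : C) n0 n : (n0 <= n)%nat ->
  sum_n (fun m => if (m =? n0)%nat then x else RtoC 0) n = x.
Proof.
  induction n as [|n IH]; intros Hn.
  - rewrite sum_O. replace n0 with 0%nat by lia. reflexivity.
  - rewrite sum_Sn. fold_C_plus. destruct (Nat.eq_dec n0 (S n)) as [->|Hne].
    + rewrite Nat.eqb_refl, sum_n_C_zero; [ring|].
      intros k Hk. destruct (Nat.eqb_spec k (S n)); [lia | reflexivity].
    + rewrite IH by lia. destruct (Nat.eqb_spec (S n) n0); [lia | ring].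
Qed.

Lemma sum_n_C_ones n : sum_n (fun _ => RtoC 1) n = RtoC (INR (S n)).
Proof.
  induction n as [|n IH]; [rewrite sum_O; reflexivity|].
  rewrite sum_Sn, IH, (S_INR (S n)), RtoC_plus. reflexivity.
Qed.

Lemma sum_n_Cminus (u v : nat -> C) n :
  sum_n (fun k => (u k - v k)%C) n = (sum_n u n - sum_n v n)%C.
Proof.
  induction n as [|n IH]; [rewrite !sum_O; reflexivity|].
  rewrite !sum_Sn, IH. fold_C_plus. ring.
Qed.

Lemma fst_sum_n (f : nat -> C) n : fst (sum_n f n) = sum_n (fun m => fst (f m)) n.
Proof. induction n as [|n IH]; [rewrite !sum_O | rewrite !sum_Sn, <- IH]; reflexivity. Qed.

Lemma snd_sum_n (f : nat -> C) n : snd (sum_n f n) = sum_n (fun m => snd (f m)) n.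
Proof. induction n as [|n IH]; [rewrite !sum_O | rewrite !sum_Sn, <- IH]; reflexivity. Qed.

Lemma polcomb_eq_0 N c m :
  (forall k, (k <= N)%nat -> Nat.iter k T m <> 1%nat) -> polcomb N c m = 0%C.
Proof.
  intros Hm. apply sum_n_C_zero. intros k Hk. unfold Pol.
  destruct ((1 <=? m)%nat && sigma_is m k) eqn:E.
  - apply andb_true_iff, proj2, sigma_is_iter, (Hm k Hk) in E. contradiction.
  - apply Cmult_0_r.
Qed.

Lemma polcomb_large N c m : (2 ^ N < m)%nat -> polcomb N c m = 0%C.
Proof.
  intros Hm. apply polcomb_eq_0. intros k Hk H.
  pose proof (le_pow2_iter_T k m) as Hle. rewrite H in Hle.
  pose proof (Nat.pow_le_mono_r 2 k N ltac:(lia) Hk). lia.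
Qed.

Lemma polcomb_not_sigma_finite N c m : ~ sigma_finite m -> polcomb N c m = 0%C.
Proof. intros Hm. apply polcomb_eq_0. intros k _ H. apply Hm. exists k. exact H. Qed.

Lemma polcomb_ones N m :
  polcomb N (fun _ => 1%C) m =
  if (1 <=? m)%nat && reaches_within m N then 1%C else 0%C.
Proof.
  unfold polcomb, Pol. induction N as [|N IH].
  - rewrite sum_O, sigma_is_0, reaches_within_0.
    destruct (_ && _); apply Cmult_1_l.
  - rewrite sum_Sn, IH, sigma_is_S, reaches_within_S. fold_C_plus.
    destruct (1 <=? m)%nat, (reaches_within m N), (Nat.iter (S N) T m =? 1)%nat;
      simpl; ring.
Qed.

Lemma iter_Fop_zz2 n : Nat.iter n Fop zz2 = polcomb (S n) (fun _ => 1%C).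
Proof.
  apply functional_extensionality. intros m.
  rewrite iter_Fop, polcomb_ones.
  destruct m as [|m]; [rewrite iter_T_0; reflexivity|].
  simpl (1 <=? S m)%nat. simpl andb. unfold zz2.
  destruct (reaches_within (S m) (S n)) eqn:R.
  - apply reaches_withinP, iter_T_in_12 in R. destruct R as [-> | ->]; reflexivity.
  - assert (Hn : ~ (Nat.iter n T (S m) = 1%nat \/ Nat.iter n T (S m) = 2%nat)).
    { rewrite iter_T_in_12, <- reaches_withinP, R. discriminate. }
    destruct (Nat.eqb_spec (Nat.iter n T (S m)) 1); [tauto|].
    destruct (Nat.eqb_spec (Nat.iter n T (S m)) 2); [tauto|reflexivity].
Qed.

(** * Fixed points of F *)

Definition indicator (P : nat -> Prop) : nat -> C :=
  fun m => if excluded_middle_informative (P m) then 1%C else 0%C.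

Lemma indicator_in (P : nat -> Prop) m : P m -> indicator P m = 1%C.
Proof. unfold indicator. destruct excluded_middle_informative; tauto. Qed.

Lemma indicator_out (P : nat -> Prop) m : ~ P m -> indicator P m = 0%C.
Proof. unfold indicator. destruct excluded_middle_informative; tauto. Qed.

Lemma Cmod_indicator_le_1 (P : nat -> Prop) m : Cmod (indicator P m) <= 1.
Proof.
  unfold indicator. destruct excluded_middle_informative;
    [rewrite Cmod_1 | rewrite Cmod_0]; lra.
Qed.

Lemma inAD_bounded (a : nat -> C) : (forall n, Cmod (a n) <= 1) -> inAD a.
Proof.
  intros Ha z Hz.
  apply (@ex_series_le C_AbsRing C_CompleteNormedModule _ (fun n => Cmod z ^ n)).
  - intros n. change (norm (term a z n)) with (Cmod (term a z n)).
    unfold term. rewrite Cmod_mult, Cmod_pow.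
    pose proof (pow_le (Cmod z) n (Cmod_ge_0 z)). pose proof (Ha n). nra.
  - apply ex_series_geom. rewrite Rabs_pos_eq; [exact Hz | apply Cmod_ge_0].
Qed.

Lemma indicator_fixedF (P : nat -> Prop) :
  (forall m, P (T m) <-> P m) -> fixedF (indicator P).
Proof.
  intros HP. split; [apply inAD_bounded, Cmod_indicator_le_1|].
  intros m. rewrite Fop_T. unfold indicator.
  destruct excluded_middle_informative as [A|A], excluded_middle_informative as [B|B];
    firstorder.
Qed.

Lemma fixedF_iter h : fixedF h -> forall k m, h (Nat.iter k T m) = h m.
Proof.
  intros [_ Hfix] k. induction k as [|k IH]; intros m; [reflexivity|].
  rewrite Nat.iter_succ_r, IH, <- Fop_T. apply Hfix.
Qed.

(* Coefficients of the constant 1 and of z/(1-z) = sum_{m>=1} z^m. *)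
Definition one_series : nat -> C := indicator (fun m => m = 0%nat).
Definition geom_series : nat -> C := indicator (fun m => m <> 0%nat).

Lemma one_series_fixedF : fixedF one_series.
Proof. apply indicator_fixedF. intros m. apply T_eq_0. Qed.

Lemma geom_series_fixedF : fixedF geom_series.
Proof. apply indicator_fixedF. intros m. rewrite T_eq_0. tauto. Qed.

Lemma indicator_sigma_finite_fixedF : fixedF (indicator sigma_finite).
Proof. apply indicator_fixedF, sigma_finite_T. Qed.

Lemma one_series_0 : one_series 0%nat = 1%C.
Proof. apply indicator_in. reflexivity. Qed.
Lemma one_series_S m : one_series (S m) = 0%C.
Proof. apply indicator_out. discriminate. Qed.
Lemma geom_series_0 : geom_series 0%nat = 0%C.
Proof. apply indicator_out. tauto. Qed.
Lemma geom_series_S m : geom_series (S m) = 1%C.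
Proof. apply indicator_in. discriminate. Qed.

Definition collatz : Prop := forall n : nat, (1 <= n)%nat -> sigma_finite n.

Lemma fixedF_decomposition (Hc : collatz) h :
  fixedF h -> forall m, h m = (h 0%nat * one_series m + h 1%nat * geom_series m)%C.
Proof.
  intros Hh [|m].
  - rewrite one_series_0, geom_series_0. ring.
  - destruct (Hc (S m)) as [k Hk]; [lia|].
    rewrite one_series_S, geom_series_S, <- (fixedF_iter h Hh k (S m)), Hk. ring.
Qed.

Lemma collatz_fixed_space_dim2 : collatz -> fixed_space_dim2.
Proof.
  intros Hc. exists one_series, geom_series.
  split; [exact one_series_fixedF|]. split; [exact geom_series_fixedF|]. split.
  - intros a b H. specialize (H 0%nat) as H0. specialize (H 1%nat) as H1.
    rewrite one_series_0, geom_series_0 in H0. rewrite one_series_S, geom_series_S in H1.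
    split; [rewrite <- H0 | rewrite <- H1]; ring.
  - intros h Hh. exists (h 0%nat), (h 1%nat). exact (fixedF_decomposition Hc h Hh).
Qed.

Definition det3 (x00 x01 x02 x10 x11 x12 x20 x21 x22 : C) : C :=
  (x00 * (x11 * x22 - x12 * x21) - x01 * (x10 * x22 - x12 * x20)
   + x02 * (x10 * x21 - x11 * x20))%C.

Lemma det3_span2 (a1 b1 a2 b2 a3 b3 p0 p1 p2 q0 q1 q2 : C) :
  det3 (a1*p0+b1*q0) (a1*p1+b1*q1) (a1*p2+b1*q2)
       (a2*p0+b2*q0) (a2*p1+b2*q1) (a2*p2+b2*q2)
       (a3*p0+b3*q0) (a3*p1+b3*q1) (a3*p2+b3*q2) = 0%C.
Proof. unfold det3. ring. Qed.

(* At 0, 1 and a non-reaching n0, the values of 1, z/(1-z) and the indicator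
   of the numbers reaching 1 form a matrix of determinant -1. *)
Lemma fixed_space_dim2_collatz : fixed_space_dim2 -> collatz.
Proof.
  intros [h1 [h2 [_ [_ [_ Hspan]]]]] n0 Hn0. apply NNPP. intros Hn0_inf.
  destruct (Hspan _ one_series_fixedF) as [a1 [b1 E1]].
  destruct (Hspan _ geom_series_fixedF) as [a2 [b2 E2]].
  destruct (Hspan _ indicator_sigma_finite_fixedF) as [a3 [b3 E3]].
  pose proof (det3_span2 a1 b1 a2 b2 a3 b3 (h1 0%nat) (h1 1%nat) (h1 n0)
                (h2 0%nat) (h2 1%nat) (h2 n0)) as D.
  rewrite <- !E1, <- !E2, <- !E3 in D.
  destruct n0 as [|n0]; [lia|].
  rewrite one_series_0, !one_series_S, geom_series_0, !geom_series_S in D.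
  rewrite (indicator_out _ 0%nat), (indicator_in _ 1%nat), (indicator_out _ (S n0)) in D.
  - unfold det3 in D. apply (f_equal fst) in D. simpl in D. lra.
  - exact Hn0_inf.
  - exists 0%nat. reflexivity.
  - intros [k Hk]. rewrite iter_T_0 in Hk. discriminate.
Qed.

(** * Cauchy's estimate for polynomials *)

Definition cis (t : R) : C := (cos t, sin t).

Lemma cis_add s t : (cis s * cis t)%C = cis (s + t).
Proof. unfold cis, Cmult. simpl. rewrite cos_plus, sin_plus. f_equal; ring. Qed.

Lemma cis_pow t j : (cis t ^ j)%C = cis (INR j * t).
Proof.
  induction j as [|j IH].
  - unfold cis. simpl. rewrite Rmult_0_l, cos_0, sin_0. reflexivity.
  - rewrite Cpow_S, IH, cis_add, S_INR. f_equal. ring.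
Qed.

Lemma Cmod_cis t : Cmod (cis t) = 1.
Proof.
  unfold Cmod, cis. simpl. pose proof (sin2_cos2 t) as H. unfold Rsqr in H.
  replace (cos t * (cos t * 1) + sin t * (sin t * 1)) with 1 by lra. apply sqrt_1.
Qed.

Lemma cis_neq_1 t : 0 < t < 2 * PI -> cis t <> 1%C.
Proof.
  intros Ht E. apply (f_equal fst) in E. simpl in E.
  replace t with (2 * (t / 2)) in E by field. rewrite cos_2a_sin in E.
  assert (0 < sin (t / 2)) by (apply sin_gt_0; lra). nra.
Qed.

Lemma geom_sum_C (w : C) n :
  ((w - 1) * sum_n (fun j => w ^ j) n)%C = (w ^ S n - 1)%C.
Proof.
  induction n as [|n IH]; [rewrite sum_O; simpl; ring|].
  rewrite sum_Sn. fold_C_plus. rewrite Cmult_plus_distr_l, IH, !Cpow_S. ring.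
Qed.

Lemma sum_pow_root_of_unity (w : C) n :
  (w ^ S n)%C = 1%C -> w <> 1%C -> sum_n (fun j => (w ^ j)%C) n = RtoC 0.
Proof.
  intros Hw1 Hw. apply Cminus_eq_contra in Hw.
  pose proof (geom_sum_C w n) as G. rewrite Hw1 in G.
  replace (sum_n _ n) with (/ (w - 1) * ((w - 1) * sum_n (fun j => w ^ j) n))%C
    by (fold_C_plus; field; exact Hw).
  rewrite G. fold_C_plus. ring.
Qed.

Section CauchyEstimate.

Variable L : nat.
Let K := S L.
Let w := cis (2 * PI / INR K).

Let INR_K_pos : 0 < INR K.
Proof. apply lt_0_INR. unfold K. lia. Qed.

Let w_pow k : (w ^ k)%C = cis (2 * PI * (INR k / INR K)).
Proof. unfold w. rewrite cis_pow. f_equal. field. lra. Qed.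

Let w_pow_K : (w ^ K)%C = 1%C.
Proof.
  rewrite w_pow, Rdiv_diag by lra. unfold cis.
  rewrite Rmult_1_r, cos_2PI, sin_2PI. reflexivity.
Qed.

Let Cmod_w_pow k : Cmod (w ^ k) = 1.
Proof. rewrite w_pow. apply Cmod_cis. Qed.

Let w_pow_neq_1 k : (0 < k < K)%nat -> (w ^ k)%C <> 1%C.
Proof.
  intros Hk. rewrite w_pow. apply cis_neq_1. pose proof PI_RGT_0.
  assert (0 < INR k / INR K < 1).
  { assert (0 < INR k) by (apply lt_0_INR; lia).
    assert (INR k < INR K) by (apply lt_INR; lia).
    split; [apply Rdiv_lt_0_compat; lra|].
    rewrite <- (Rdiv_diag (INR K)) by lra.
    apply Rmult_lt_compat_r; [apply Rinv_0_lt_compat|]; lra. }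
  nra.
Qed.

Let sum_w_powers p : (0 < p < 2 * K)%nat ->
  sum_n (fun j => ((w ^ p) ^ j)%C) L = if (p =? K)%nat then RtoC (INR K) else RtoC 0.
Proof.
  intros Hp. destruct (Nat.eqb_spec p K) as [->|Hne].
  - rewrite w_pow_K, (sum_n_ext _ (fun _ => RtoC 1)) by (intros; apply Cpow_1_l).
    apply sum_n_C_ones.
  - apply sum_pow_root_of_unity.
    + rewrite <- Cpow_mult_r, Nat.mul_comm, Cpow_mult_r. fold K.
      rewrite w_pow_K. apply Cpow_1_l.
    + destruct (Nat.lt_ge_cases p K); [apply w_pow_neq_1; lia|].
      replace p with (K + (p - K))%nat by lia.
      rewrite Cpow_add_r, w_pow_K, Cmult_1_l. apply w_pow_neq_1. lia.
Qed.

(* Discrete Cauchy formula: pairing the values of the polynomial on the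
   circle of radius r at the K-th roots of unity with w^(-jn) = (w^j)^(K-n)
   isolates the n-th coefficient. *)
Let coef_extraction (p : nat -> C) (n : nat) (r : R) : (n <= L)%nat ->
  sum_n (fun j => (sum_n (fun m => p m * (r * w ^ j) ^ m) L * (w ^ j) ^ (K - n))%C) L
  = (INR K * (p n * r ^ n))%C.
Proof.
  intros Hn.
  rewrite (sum_n_ext _ (fun j => sum_n (fun m => (p m * r ^ m) * (w ^ (m + (K - n))) ^ j)%C L)).
  2:{ intros j. rewrite <- sum_n_Cmult_r. apply sum_n_ext. intros m.
      rewrite Cpow_mult_l, <- !Cpow_mult_r, (Nat.mul_comm (m + (K - n))),
        Nat.mul_add_distr_l, Cpow_add_r. fold_C_plus. ring. }
  rewrite sum_n_switch.
  rewrite (sum_n_ext_loc _ (fun m => if (m =? n)%nat then (INR K * (p n * r ^ n))%C else RtoC 0)).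
  2:{ intros m Hm. rewrite sum_n_Cmult_l, sum_w_powers by (unfold K; lia).
      destruct (Nat.eqb_spec m n) as [->|Hne].
      - replace (n + (K - n) =? K)%nat with true by (symmetry; apply Nat.eqb_eq; unfold K; lia).
        fold_C_plus. ring.
      - replace (m + (K - n) =? K)%nat with false by (symmetry; apply Nat.eqb_neq; unfold K; lia).
        fold_C_plus. ring. }
  apply sum_n_C_delta. exact Hn.
Qed.

Lemma polynomial_coef_bound (p : nat -> C) (n : nat) (r B : R) :
  0 <= r -> (n <= L)%nat ->
  (forall z : C, Cmod z = r -> Cmod (sum_n (fun m => (p m * z ^ m)%C) L) <= B) ->
  Cmod (p n) * r ^ n <= B.
Proof.
  intros Hr Hn Hbound.
  pose proof (f_equal Cmod (coef_extraction p n r Hn)) as E.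
  rewrite !Cmod_mult, Cmod_R, Cmod_pow, Cmod_R, Rabs_pos_eq, Rabs_pos_eq in E
    by (apply pos_INR || exact Hr).
  assert (Hsum : INR K * (Cmod (p n) * r ^ n) <= INR K * B).
  { rewrite <- E. eapply Rle_trans; [apply Cmod_sum_n|].
    apply sum_n_le_const. intros j _.
    rewrite Cmod_mult, Cmod_pow, Cmod_w_pow, pow1, Rmult_1_r.
    apply Hbound. rewrite Cmod_mult, Cmod_w_pow, Cmod_R, Rabs_pos_eq by exact Hr.
    ring. }
  apply Rmult_le_reg_l in Hsum; [exact Hsum | exact INR_K_pos].
Qed.

End CauchyEstimate.

(** * Power series with bounded coefficients *)

Lemma Series_finite (u : nat -> R) D :
  (forall m, (D < m)%nat -> u m = 0) -> Series u = sum_n u D.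
Proof.
  intros H. apply is_series_unique. change (is_lim_seq (sum_n u) (sum_n u D)).
  apply (is_lim_seq_ext_loc (fun _ => sum_n u D)); [|apply is_lim_seq_const].
  exists D. intros n Hn. replace n with (D + (n - D))%nat by lia.
  induction (n - D)%nat as [|k IH]; [rewrite Nat.add_0_r; reflexivity|].
  rewrite Nat.add_succ_r, sum_Sn, <- IH, H by lia. symmetry. exact (Rplus_0_r _).
Qed.

Lemma PS_finite (a : nat -> C) D z :
  (forall m, (D < m)%nat -> a m = 0%C) -> PS a z = sum_n (fun m => (a m * z ^ m)%C) D.
Proof.
  intros H. unfold PS. apply injective_projections; cbn [fst snd];
    [rewrite fst_sum_n | rewrite snd_sum_n]; apply Series_finite;
    intros m Hm; unfold term; rewrite H by exact Hm; simpl; ring.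
Qed.

Lemma Series_tail_bound (u : nat -> R) r M :
  0 <= r < 1 -> (forall m, Rabs (u m) <= r ^ m) ->
  Rabs (Series u - sum_n u M) <= r ^ S M / (1 - r).
Proof.
  intros Hr Hu.
  assert (Hgeom : ex_series (fun k => r ^ S M * r ^ k)).
  { apply (ex_series_scal_l (V := R_NormedModule)), ex_series_geom.
    rewrite Rabs_pos_eq; lra. }
  assert (Hdom : forall k, Rabs (u (S M + k)%nat) <= r ^ S M * r ^ k).
  { intros k. rewrite <- pow_add. apply Hu. }
  assert (Htail : ex_series (fun k => Rabs (u (S M + k)%nat))).
  { refine (@ex_series_le R_AbsRing R_CompleteNormedModule _ _ _ Hgeom).
    intros k. change (norm (Rabs ?x)) with (Rabs (Rabs x)). rewrite Rabs_Rabsolu. apply Hdom. }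
  rewrite (Series_incr_n u (S M)) by
    (lia || apply ex_series_Rabs, (ex_series_incr_n _ (S M)), Htail).
  simpl pred. rewrite <- sum_n_Reals.
  replace (_ + _ - _) with (Series (fun k => u (S M + k)%nat)) by ring.
  eapply Rle_trans; [apply Series_Rabs, Htail|].
  eapply Rle_trans; [apply (Series_le _ _ (fun k => conj (Rabs_pos _) (Hdom k)) Hgeom)|].
  rewrite Series_scal_l, Series_geom by (rewrite Rabs_pos_eq; lra). apply Req_le. reflexivity.
Qed.

Lemma Cmod_le_abs_re_im (x : C) : Cmod x <= Rabs (fst x) + Rabs (snd x).
Proof.
  pose proof (Rabs_pos (fst x)). pose proof (Rabs_pos (snd x)).
  unfold Cmod. rewrite <- (sqrt_pow2 (Rabs (fst x) + Rabs (snd x))) by lra.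
  apply sqrt_le_1_alt. rewrite <- (pow2_abs (fst x)), <- (pow2_abs (snd x)). nra.
Qed.

Lemma PS_tail_bound (a : nat -> C) (z : C) r M :
  0 <= r < 1 -> Cmod z <= r -> (forall m, Cmod (a m) <= 1) ->
  Cmod (PS a z - sum_n (fun m => (a m * z ^ m)%C) M)%C <= 2 * (r ^ S M / (1 - r)).
Proof.
  intros Hr Hz Ha.
  assert (Hterm : forall m, Cmod (term a z m) <= r ^ m).
  { intros m. unfold term. rewrite Cmod_mult, Cmod_pow.
    pose proof (Ha m). pose proof (Cmod_ge_0 (a m)).
    assert (0 <= Cmod z ^ m <= r ^ m) by (split; [apply pow_le | apply pow_incr];
      pose proof (Cmod_ge_0 z); lra).
    nra. }
  assert (Hre : forall m, Rabs (fst (term a z m)) <= r ^ m).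
  { intros m. eapply Rle_trans; [apply re_le_Cmod | apply Hterm]. }
  assert (Him : forall m, Rabs (snd (term a z m)) <= r ^ m).
  { intros m. eapply Rle_trans; [|apply Hterm]. pose proof (Rmax_Cmod (term a z m)).
    pose proof (Rmax_r (Rabs (fst (term a z m))) (Rabs (snd (term a z m)))). lra. }
  eapply Rle_trans; [apply Cmod_le_abs_re_im|].
  change (fst (PS a z - ?s)%C) with (fst (PS a z) - fst s).
  change (snd (PS a z - ?s)%C) with (snd (PS a z) - snd s).
  rewrite fst_sum_n, snd_sum_n.
  pose proof (Series_tail_bound _ r M Hr Hre). pose proof (Series_tail_bound _ r M Hr Him).
  unfold PS. cbn [fst snd]. unfold term in *. lra.
Qed.

Lemma geom_series_partial_sum (z : C) L : z <> 1%C ->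
  sum_n (fun m => (geom_series m * z ^ m)%C) L = (z / (1 - z) - z ^ S L / (1 - z))%C.
Proof.
  intros Hz. apply Cminus_eq_contra in Hz. assert (H1z : (1 - z)%C <> 0%C).
  { intros E. apply Hz. rewrite <- (Copp_minus_distr 1 z), E. ring. }
  induction L as [|L IH].
  - rewrite sum_O, geom_series_0. fold_C_plus. field. exact H1z.
  - rewrite sum_Sn, IH, geom_series_S, (Cpow_S z (S L)). fold_C_plus. field. exact H1z.
Qed.

Lemma Cmod_1_minus (z : C) : 1 - Cmod z <= Cmod (1 - z).
Proof.
  pose proof (Cmod_triangle (1 - z)%C z) as H.
  replace (1 - z + z)%C with (RtoC 1) in H by ring. rewrite Cmod_1 in H. lra.
Qed.

Lemma pow_le_pow_le_1 x m n : 0 <= x <= 1 -> (m <= n)%nat -> x ^ n <= x ^ m.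
Proof.
  intros Hx Hmn. replace n with (m + (n - m))%nat by lia. rewrite pow_add.
  pose proof (pow_le x m (proj1 Hx)). pose proof (pow_le x (n - m) (proj1 Hx)).
  pose proof (pow_incr x 1 (n - m) Hx). rewrite pow1 in *. nra.
Qed.

Lemma Cmod_geom_remainder (z : C) r L :
  Cmod z <= r -> r < 1 -> Cmod (z ^ S L / (1 - z))%C <= r ^ S L / (1 - r).
Proof.
  intros Hz Hr. pose proof (Cmod_ge_0 z). pose proof (Cmod_1_minus z).
  assert (H1z : (1 - z)%C <> 0%C) by (intros E; rewrite E, Cmod_0 in *; lra).
  rewrite Cmod_div, Cmod_pow by exact H1z. unfold Rdiv.
  apply Rmult_le_compat.
  - apply pow_le. lra.
  - left. apply Rinv_0_lt_compat. lra.
  - apply pow_incr. lra.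
  - apply Rinv_le_contravar; lra.
Qed.

(* Truncating z/(1-z) at a degree L >= 2^N makes the approximation error a
   polynomial; Cauchy's estimate on |z| = 1/2 bounds its n0-th coefficient,
   which is 1, by 1/2. *)
Lemma inZ_collatz : inZ (fun z => (z / (1 - z))%C) -> collatz.
Proof.
  intros HZ n0 Hn0. apply NNPP. intros Hn0_inf.
  set (r := / 2). assert (Hr : 0 < r < 1) by (unfold r; lra).
  assert (Hrn : 0 < r ^ n0) by (apply pow_lt; lra).
  destruct (HZ r (r ^ n0 / 4) Hr ltac:(lra)) as [N [c HN]].
  set (L := (n0 + 2 + 2 ^ N)%nat).
  set (e := fun m => (geom_series m - polcomb N c m)%C).
  assert (He : e n0 = 1%C).
  { unfold e. rewrite polcomb_not_sigma_finite by exact Hn0_inf.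
    destruct n0 as [|n0]; [lia|]. rewrite geom_series_S. ring. }
  assert (Hremainder : r ^ S L / (1 - r) <= r ^ n0 / 4).
  { replace (r ^ S L / (1 - r)) with (r ^ L) by (unfold r; simpl; field).
    replace (r ^ n0 / 4) with (r ^ (n0 + 2)) by (rewrite pow_add; unfold r; simpl; field).
    apply pow_le_pow_le_1; [lra | unfold L; lia]. }
  assert (Hbound : forall z : C, Cmod z = r ->
            Cmod (sum_n (fun m => (e m * z ^ m)%C) L) <= r ^ n0 / 2).
  { intros z Hz.
    assert (Hz1 : z <> 1%C) by (intros E; rewrite E, Cmod_1 in Hz; lra).
    rewrite (sum_n_ext _ (fun m => (geom_series m * z ^ m - polcomb N c m * z ^ m)%C))
      by (intros; unfold e; fold_C_plus; ring).
    rewrite sum_n_Cminus, geom_series_partial_sum, <- PS_finite by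
      (exact Hz1 || (intros m Hm; apply polcomb_large; unfold L in Hm; lia)).
    replace (_ - _ - _)%C with
      ((z / (1 - z) - PS (polcomb N c) z) - z ^ S L / (1 - z))%C by ring.
    eapply Rle_trans; [apply Cmod_triangle|]. rewrite Cmod_opp.
    pose proof (HN z ltac:(lra)). pose proof (Cmod_geom_remainder z r L ltac:(lra) ltac:(lra)).
    lra. }
  pose proof (polynomial_coef_bound L e n0 r _ ltac:(lra) ltac:(unfold L; lia) Hbound) as B.
  rewrite He, Cmod_1 in B. lra.
Qed.

Lemma collatz_stopping_time_bound : collatz -> forall M, exists N0,
  forall m, (1 <= m <= M)%nat -> exists k, (k <= N0)%nat /\ Nat.iter k T m = 1%nat.
Proof.
  intros Hc M. induction M as [|M [N0 HN0]]; [exists 0%nat; lia|].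
  destruct (Hc (S M) ltac:(lia)) as [k Hk].
  exists (Nat.max N0 k). intros m Hm.
  destruct (Nat.eq_dec m (S M)) as [->|Hne].
  - exists k. split; [lia | exact Hk].
  - destruct (HN0 m ltac:(lia)) as [k' [Hk' H']]. exists k'. split; [lia | exact H'].
Qed.

Lemma collatz_cvg_AD :
  collatz -> cvg_AD (fun n => Nat.iter n Fop zz2) (fun z => (z / (1 - z))%C).
Proof.
  intros Hc r eps Hr He.
  destruct (pow_lt_1_zero r ltac:(rewrite Rabs_pos_eq; lra) (eps * (1 - r) / 3)
              ltac:(apply Rdiv_lt_0_compat; nra)) as [M HM].
  specialize (HM (S M) ltac:(lia)). rewrite Rabs_pos_eq in HM by (apply pow_le; lra).
  assert (HMeps : r ^ S M / (1 - r) < eps / 3).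
  { apply (Rmult_lt_reg_r (1 - r)); [lra|]. field_simplify; lra. }
  destruct (collatz_stopping_time_bound Hc M) as [N0 HN0]. exists N0. intros n Hn z Hz.
  rewrite iter_Fop_zz2. set (a := polcomb (S n) (fun _ => 1%C)).
  assert (Ha1 : forall m, Cmod (a m) <= 1).
  { intros m. unfold a. rewrite polcomb_ones.
    destruct (_ && _); [rewrite Cmod_1 | rewrite Cmod_0]; lra. }
  assert (Hagree : forall m, (m <= M)%nat -> (a m * z ^ m)%C = (geom_series m * z ^ m)%C).
  { intros [|m] Hm; unfold a; rewrite polcomb_ones;
      [rewrite geom_series_0; reflexivity|rewrite geom_series_S].
    destruct (HN0 (S m) ltac:(lia)) as [k [Hk Hiter]].
    replace (reaches_within (S m) (S n)) with true; [reflexivity|].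
    symmetry. apply reaches_withinP. exists k. split; [lia | exact Hiter]. }
  assert (Hz1 : z <> 1%C) by (intros E; rewrite E, Cmod_1 in Hz; lra).
  pose proof (PS_tail_bound a z r M ltac:(lra) Hz Ha1) as Htail.
  rewrite (sum_n_ext_loc _ _ _ Hagree), geom_series_partial_sum in Htail by exact Hz1.
  replace (PS a z - z / (1 - z))%C with
    ((PS a z - (z / (1 - z) - z ^ S M / (1 - z))) - z ^ S M / (1 - z))%C by ring.
  eapply Rle_lt_trans; [apply Cmod_triangle|]. rewrite Cmod_opp.
  pose proof (Cmod_geom_remainder z r M Hz ltac:(lra)). lra.
Qed.

Lemma cvg_AD_inZ :
  cvg_AD (fun n => Nat.iter n Fop zz2) (fun z => (z / (1 - z))%C) ->
  inZ (fun z => (z / (1 - z))%C).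
Proof.
  intros H r eps Hr He. destruct (H r eps Hr He) as [N HN].
  exists (S N), (fun _ => 1%C). intros z Hz.
  rewrite <- iter_Fop_zz2, <- Cmod_opp.
  replace (- _)%C with (PS (Nat.iter N Fop zz2) z - z / (1 - z))%C by ring.
  apply HN; [lia | exact Hz].
Qed.

Theorem mainTheorem12 :
  ((forall n : nat, (1 <= n)%nat -> sigma_finite n) <-> fixed_space_dim2) /\
  (fixed_space_dim2 <-> inZ (fun z => (z / (1 - z))%C)) /\
  (inZ (fun z => (z / (1 - z))%C) <->
     cvg_AD (fun n => Nat.iter n Fop zz2) (fun z => (z / (1 - z))%C)).
Proof.
  pose proof collatz_fixed_space_dim2. pose proof fixed_space_dim2_collatz.
  pose proof inZ_collatz. pose proof collatz_cvg_AD. pose proof cvg_AD_inZ.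
  unfold collatz in *. tauto.
Qed.
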